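(* Let $\Delta$ be a thick building and let $G$ be a group acting strongly transitively on $\Delta$ with respect to the complete apartment system $\overline{\mathcal{A}}$. Fix an apartment $\Sigma_0\in\overline{\mathcal{A}}$, let $N=\mathrm{Stab}_G(\Sigma_0)$ and $T=\{t\in N\mid tC=C \text{ for all chambers } C \text{ of }\Sigma_0\}$. If there exists $n_0\in N\setminus T$ such that every element of the coset $n_0T$ has finite order in $G$, then no torsionfree subgroup of $G$ acts weakly transitively on $\Delta$.
   Context: $\overline{\mathcal{A}}$ is the set of all apartments of $\Delta$. A type-preserving action of $G$ on $\Delta$ is strongly transitive with respect to a system of apartments $\mathcal{A}$ if it is transitive on pairs $(C,\Sigma)$ with $\Sigma\in\mathcal{A}$ and $C$ a chamber of $\Sigma$. A type-preserving action of a group $H$ on $\Delta$ is weakly transitive if there is an apartment $\Sigma\in\overline{\mathcal{A}}$ such that $\mathrm{Stab}_H(\Sigma)$ acts transitively on the set of chambers of $\Sigma$. *)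

(* Buildings are formalized via the W-metric approach
   (Abramenko--Brown, "Buildings", Def. 5.1), with (W,S) a Coxeter system. *)
From Stdlib Require Import List Arith.
Set Implicit Arguments.

Record group := Group {
  gcar :> Type;
  gmul : gcar -> gcar -> gcar;
  gone : gcar;
  ginv : gcar -> gcar;
  gmulA : forall x y z, gmul x (gmul y z) = gmul (gmul x y) z;
  gmul1l : forall x, gmul gone x = x;
  gmulVl : forall x, gmul (ginv x) x = gone
}.
Arguments gmul {g}. Arguments gone {g}. Arguments ginv {g}.

Fixpoint gpow {G : group} (g : G) (n : nat) : G :=
  match n with O => gone | S n => gmul g (gpow g n) end.

Definition is_hom {G H : group} (phi : G -> H) : Prop :=
  forall x y, phi (gmul x y) = gmul (phi x) (phi y).

Definition finite_order {G : group} (g : G) : Prop :=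
  exists n, 1 <= n /\ gpow g n = gone.

Definition is_subgroup {G : group} (H : G -> Prop) : Prop :=
  H gone /\ (forall x y, H x -> H y -> H (gmul x y)) /\ (forall x, H x -> H (ginv x)).

Definition torsionfree {G : group} (H : G -> Prop) : Prop :=
  forall h, H h -> finite_order h -> h = gone.

Definition word_prod {W : group} (l : list W) : W := fold_right gmul gone l.

Definition has_word_of_length {W : group} (S : W -> Prop) (w : W) (n : nat) : Prop :=
  exists l : list W, length l = n /\ Forall S l /\ word_prod l = w.

Definition is_length {W : group} (S : W -> Prop) (w : W) (n : nat) : Prop :=
  has_word_of_length S w n /\ (forall m, has_word_of_length S w m -> n <= m).

(* (W,S) is a Coxeter system: S consists of involutions, generates W, and
   W has the Coxeter presentation  < S | (s t)^{m(s,t)} = 1 >  where m(s,t)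
   is the order of s t (universal property w.r.t. all groups). *)
Definition coxeter_system {W : group} (S : W -> Prop) : Prop :=
  (forall s, S s -> s <> gone /\ gmul s s = gone) /\
  (forall w, exists n, has_word_of_length S w n) /\
  (forall (H : group) (f : W -> H),
      (forall s t n, S s -> S t -> gpow (gmul s t) n = gone ->
                     gpow (gmul (f s) (f t)) n = gone) ->
      exists phi : W -> H, is_hom phi /\ forall s, S s -> phi s = f s).

Record building (W : group) (S : W -> Prop) := Building {
  chamber : Type;
  wdist : chamber -> chamber -> W;
  WD1 : forall C D, wdist C D = gone <-> C = D;
  WD2 : forall C D C' s, S s -> wdist C' C = s ->
          (wdist C' D = gmul s (wdist C D) \/ wdist C' D = wdist C D) /\
          ((exists n, is_length S (wdist C D) n /\
                      is_length S (gmul s (wdist C D)) (n + 1)) ->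
           wdist C' D = gmul s (wdist C D));
  WD3 : forall C D s, S s -> exists C',
          wdist C' C = s /\ wdist C' D = gmul s (wdist C D)
}.
Arguments chamber {W S}. Arguments wdist {W S b}.

(* thick: every panel contains at least three chambers *)
Definition thick {W : group} {S : W -> Prop} (B : building W S) : Prop :=
  forall (C : chamber B) s, S s ->
    exists D1 D2, D1 <> D2 /\ wdist C D1 = s /\ wdist C D2 = s.

(* apartments of the complete apartment system: images of isometries W -> Delta
   (W carrying its W-distance (u,v) |-> u^{-1} v) *)
Definition apartment {W : group} {S : W -> Prop} (B : building W S)
    (Sigma : chamber B -> Prop) : Prop :=
  exists alpha : W -> chamber B,
    (forall u v, wdist (alpha u) (alpha v) = gmul (ginv u) v) /\
    (forall C, Sigma C <-> exists w, alpha w = C).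

Definition tp_action {W : group} {S : W -> Prop} (B : building W S) {G : group}
    (act : G -> chamber B -> chamber B) : Prop :=
  (forall C, act gone C = C) /\
  (forall g h C, act (gmul g h) C = act g (act h C)) /\
  (forall g C D, wdist (act g C) (act g D) = wdist C D).

Definition maps_set {W : group} {S : W -> Prop} {B : building W S} {G : group}
    (act : G -> chamber B -> chamber B) (g : G) (Sigma Sigma' : chamber B -> Prop) : Prop :=
  forall D, Sigma' D <-> exists E, Sigma E /\ act g E = D.

Definition strongly_transitive {W : group} {S : W -> Prop} (B : building W S) {G : group}
    (act : G -> chamber B -> chamber B) : Prop :=
  forall Sigma Sigma' C C', apartment B Sigma -> apartment B Sigma' ->
    Sigma C -> Sigma' C' ->
    exists g, act g C = C' /\ maps_set act g Sigma Sigma'.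

Definition weakly_transitive {W : group} {S : W -> Prop} (B : building W S) {G : group}
    (act : G -> chamber B -> chamber B) (H : G -> Prop) : Prop :=
  exists Sigma, apartment B Sigma /\
    forall C D, Sigma C -> Sigma D ->
      exists h, H h /\ maps_set act h Sigma Sigma /\ act h C = D.

(* Suppose a torsionfree H acts weakly transitively on an apartment Sigma, and
   let g carry Sigma onto Sigma0.  Conjugating by g, the stabiliser of Sigma in H
   becomes a subgroup of N that is transitive on the chambers of Sigma0, so it
   contains some k with k C0 = n0 C0 for a chamber C0 moved by n0.  Then
   t = n0^-1 k stabilises Sigma0 and fixes C0, hence fixes Sigma0 chamberwise
   (a chamber of an apartment is determined by its W-distance from C0), so
   t lies in T.  Thus k = n0 t has finite order, and so does its conjugate in H,
   which must therefore be trivial; but then n0 C0 = k C0 = C0. *)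
From Stdlib Require Import List Arith Classical.

Section GroupFacts.
Context {G : group}.

Lemma gmulVr (x : G) : gmul x (ginv x) = gone.
Proof.
  set (y := gmul x (ginv x)).
  assert (Hyy : gmul y y = y).
  { unfold y. rewrite <- gmulA, (gmulA _ (ginv x)), gmulVl, gmul1l. reflexivity. }
  rewrite <- (gmul1l _ y), <- (gmulVl _ y), <- gmulA, Hyy. reflexivity.
Qed.

Lemma gmul1r (x : G) : gmul x gone = x.
Proof. rewrite <- (gmulVl _ x), gmulA, gmulVr, gmul1l. reflexivity. Qed.

Lemma gmulKV (x y : G) : gmul x (gmul (ginv x) y) = y.
Proof. rewrite gmulA, gmulVr, gmul1l. reflexivity. Qed.

Lemma gmulVK (x y : G) : gmul (ginv x) (gmul x y) = y.
Proof. rewrite gmulA, gmulVl, gmul1l. reflexivity. Qed.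

Definition gconj (g h : G) : G := gmul g (gmul h (ginv g)).

Lemma gconjK (g h : G) : gmul (ginv g) (gmul (gconj g h) g) = h.
Proof. unfold gconj. rewrite <- gmulA, gmulVK, <- gmulA, gmulVl, gmul1r. reflexivity. Qed.

Lemma gconj_inj (g h h' : G) : gconj g h = gconj g h' -> h = h'.
Proof. intros E. rewrite <- (gconjK g h), E, gconjK. reflexivity. Qed.

Lemma gconj1 (g : G) : gconj g gone = gone.
Proof. unfold gconj. rewrite gmul1l, gmulVr. reflexivity. Qed.

Lemma gpow_conj (g h : G) (n : nat) : gpow (gconj g h) n = gconj g (gpow h n).
Proof.
  unfold gconj. induction n as [|n IH]; simpl.
  - rewrite gmul1l, gmulVr. reflexivity.
  - rewrite IH, <- !gmulA, gmulVK. reflexivity.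
Qed.

Lemma finite_order_conj (g h : G) : finite_order (gconj g h) -> finite_order h.
Proof.
  intros [n [Hn Hpow]]. exists n. split; [exact Hn|].
  apply (gconj_inj g). rewrite <- gpow_conj, gconj1. exact Hpow.
Qed.

End GroupFacts.

Section Action.
Context {W : group} {S : W -> Prop} {B : building W S} {G : group}
  {act : G -> chamber B -> chamber B} (Hact : tp_action B act).

Lemma act1 C : act gone C = C.
Proof. apply (proj1 Hact). Qed.

Lemma actM g h C : act (gmul g h) C = act g (act h C).
Proof. apply (proj1 (proj2 Hact)). Qed.

Lemma actK g C : act (ginv g) (act g C) = C.
Proof. rewrite <- actM, gmulVl, act1. reflexivity. Qed.

Lemma maps_set_mul a b S1 S2 S3 :
  maps_set act a S1 S2 -> maps_set act b S2 S3 -> maps_set act (gmul b a) S1 S3.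
Proof.
  intros Ha Hb D. rewrite (Hb D). split.
  - intros [E [HE <-]]. apply Ha in HE. destruct HE as [F [HF <-]].
    exists F. rewrite actM. auto.
  - intros [E [HE <-]]. exists (act a E). rewrite actM. split; auto.
    apply Ha. exists E; auto.
Qed.

Lemma maps_set_inv a S1 S2 : maps_set act a S1 S2 -> maps_set act (ginv a) S2 S1.
Proof.
  intros Ha D. split.
  - intros HD. exists (act a D). split; [apply Ha; exists D; auto | apply actK].
  - intros [E [HE <-]]. apply Ha in HE. destruct HE as [F [HF <-]].
    rewrite actK. exact HF.
Qed.

Lemma maps_set_conj g h Sig Sig' :
  maps_set act g Sig Sig' -> maps_set act h Sig Sig ->
  maps_set act (gconj g h) Sig' Sig'.
Proof.
  intros Hg Hh. unfold gconj.
  apply (maps_set_mul _ _ _ Sig); [|exact Hg].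
  apply (maps_set_mul _ _ _ Sig); [apply maps_set_inv|]; assumption.
Qed.

Lemma apartment_wdist_inj Sig C D D' : apartment B Sig -> Sig C -> Sig D -> Sig D' ->
  wdist C D = wdist C D' -> D = D'.
Proof.
  intros [al [Hiso Hs]] HC HD HD' E.
  apply Hs in HC; apply Hs in HD; apply Hs in HD'.
  destruct HC as [u <-]; destruct HD as [v <-]; destruct HD' as [v' <-].
  rewrite !Hiso in E.
  rewrite <- (gmulKV u v), <- (gmulKV u v'), E. reflexivity.
Qed.

Lemma apartment_stab_fix Sig t C : apartment B Sig -> maps_set act t Sig Sig -> Sig C ->
  act t C = C -> forall D, Sig D -> act t D = D.
Proof.
  intros Ha Hm HC Ht D HD.
  apply (apartment_wdist_inj Sig C); [exact Ha | exact HC | apply Hm; exists D; auto | exact HD |].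
  rewrite <- Ht at 1. apply (proj2 (proj2 Hact)).
Qed.

Lemma weakly_transitive_transfer H Sig Sig' g C D :
  (forall C D, Sig C -> Sig D ->
     exists h, H h /\ maps_set act h Sig Sig /\ act h C = D) ->
  maps_set act g Sig Sig' -> Sig' C -> Sig' D ->
  exists h, H h /\ maps_set act (gconj g h) Sig' Sig' /\ act (gconj g h) C = D.
Proof.
  intros Hwt Hg HC HD.
  destruct (proj1 (Hg C) HC) as [E [HE <-]].
  destruct (proj1 (Hg D) HD) as [E' [HE' <-]].
  destruct (Hwt E E' HE HE') as [h [Hh [Hhm HhE]]].
  exists h. split; [exact Hh|]. split; [apply (maps_set_conj _ _ Sig); assumption|].
  unfold gconj. rewrite !actM, actK, HhE. reflexivity.
Qed.

End Action.

Theorem corollary2p4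
  (W : group) (S : W -> Prop) (HW : coxeter_system S)
  (B : building W S) (Hthick : thick B)
  (G : group) (act : G -> chamber B -> chamber B)
  (Hact : tp_action B act) (Hst : strongly_transitive B act)
  (Sigma0 : chamber B -> Prop) (HSigma0 : apartment B Sigma0)
  (n0 : G)
  (Hn0N : maps_set act n0 Sigma0 Sigma0)
  (Hn0T : ~ (forall C, Sigma0 C -> act n0 C = C))
  (Htors : forall t : G,
      maps_set act t Sigma0 Sigma0 -> (forall C, Sigma0 C -> act t C = C) ->
      finite_order (gmul n0 t)) :
  forall H : G -> Prop, is_subgroup H -> torsionfree H ->
    ~ weakly_transitive B act H.
Proof.
  intros H _ Htf [Sig [HSig Hwt]].
  destruct (not_all_ex_not _ _ Hn0T) as [C0 HC0].
  apply imply_to_and in HC0. destruct HC0 as [HC0 Hmoved].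
  assert (Hn0C0 : Sigma0 (act n0 C0)) by (apply Hn0N; exists C0; auto).
  destruct HSig as [al [Hal HSigal]].
  destruct (Hst Sig Sigma0 (al gone) C0) as [g [_ Hg]];
    [exists al; auto | exact HSigma0 | apply HSigal; exists gone; auto | exact HC0 |].
  destruct (weakly_transitive_transfer Hact H Sig Sigma0 g C0 (act n0 C0)
              Hwt Hg HC0 Hn0C0) as [h [Hh [Hkm HkC0]]].
  set (t := gmul (ginv n0) (gconj g h)).
  assert (Htm : maps_set act t Sigma0 Sigma0)
    by (apply (maps_set_mul Hact _ _ _ Sigma0); [|apply (maps_set_inv Hact)]; assumption).
  assert (HtC0 : act t C0 = C0)
    by (unfold t; rewrite (actM Hact), HkC0, (actK Hact); reflexivity).
  assert (Hfin : finite_order (gconj g h)).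
  { rewrite <- (gmulKV n0 (gconj g h)).
    exact (Htors t Htm (apartment_stab_fix Hact _ _ _ HSigma0 Htm HC0 HtC0)). }
  assert (Hh1 : h = gone) by exact (Htf h Hh (finite_order_conj _ _ Hfin)).
  apply Hmoved. rewrite <- HkC0, Hh1, gconj1. apply (act1 Hact).
Qed.
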